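(* The canonical model $\langle W,\mathcal{N},V\rangle$ for IML1 is an nIML1-model.
   Context: Formulas are built from a denumerable set $PV$ of propositional variables and $\bot$ using $\land,\lor,\rightarrow$ and unary $\Delta$. The axioms of IML1 are all instances of the axiom schemes of intuitionistic propositional calculus, of K: $\Delta(\varphi\rightarrow\psi)\rightarrow(\Delta\varphi\rightarrow\Delta\psi)$ and of T: $\Delta\varphi\rightarrow\varphi$. An IML1-theory is a set of formulas containing all axioms and closed under modus ponens and under RN ($\varphi\in w\Rightarrow\Delta\varphi\in w$). A theory $w$ is prime if $\bot\notin w$ and $\varphi\lor\psi\in w$ iff ($\varphi\in w$ or $\psi\in w$). Canonical model: $W$ = set of prime IML1-theories; $A_w=\{v\in W:w\subseteq v\}$, $B_w=\{v\in W:\forall\varphi\,(\Delta\varphi\in w\Rightarrow\varphi\in v)\}$, $\mathcal{N}_w=\{X\subseteq W: A_w\subseteq X\subseteq B_w\}$; $V(q)=\{w\in W:q\in w\}$. An nIML1-model is a triple $\langle W,\mathcal{N},V\rangle$ with $W\neq\emptyset$, $\mathcal{N}:W\to P(P(W))$ satisfying for all $w$: (a) $w\in\bigcap\mathcal{N}_w$; (b) $\bigcap\mathcal{N}_w\in\mathcal{N}_w$; (c) $u\in\bigcap\mathcal{N}_w\Rightarrow\bigcap\mathcal{N}_u\subseteq\bigcap\mathcal{N}_w$; (d) $\bigcap\mathcal{N}_w\subseteq X\subseteq\bigcup\mathcal{N}_w\Rightarrow X\in\mathcal{N}_w$; (e) $u\in\bigcap\mathcal{N}_w\Rightarrow\bigcup\mathcal{N}_u\subseteq\bigcup\mathcal{N}_w$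 (where $\bigcap\mathcal{N}_w$, $\bigcup\mathcal{N}_w$ are the intersection and union of the family $\mathcal{N}_w$), and $V:PV\to P(W)$ with $w\in V(q)\Rightarrow\bigcap\mathcal{N}_w\subseteq V(q)$. *)

Inductive form : Type :=
| Var : nat -> form
| Bot : form
| And : form -> form -> form
| Or  : form -> form -> form
| Imp : form -> form -> form
| Dl  : form -> form.

Inductive IML1_axiom : form -> Prop :=
| ax_K1 : forall p q, IML1_axiom (Imp p (Imp q p))
| ax_S  : forall p q r, IML1_axiom (Imp (Imp p (Imp q r)) (Imp (Imp p q) (Imp p r)))
| ax_AndE1 : forall p q, IML1_axiom (Imp (And p q) p)
| ax_AndE2 : forall p q, IML1_axiom (Imp (And p q) q)
| ax_AndI  : forall p q, IML1_axiom (Imp p (Imp q (And p q)))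
| ax_OrI1  : forall p q, IML1_axiom (Imp p (Or p q))
| ax_OrI2  : forall p q, IML1_axiom (Imp q (Or p q))
| ax_OrE   : forall p q r, IML1_axiom (Imp (Imp p r) (Imp (Imp q r) (Imp (Or p q) r)))
| ax_Bot   : forall p, IML1_axiom (Imp Bot p)
| ax_K     : forall p q, IML1_axiom (Imp (Dl (Imp p q)) (Imp (Dl p) (Dl q)))
| ax_T     : forall p, IML1_axiom (Imp (Dl p) p).

Definition IML1_theory (w : form -> Prop) : Prop :=
  (forall p, IML1_axiom p -> w p) /\
  (forall p q, w (Imp p q) -> w p -> w q) /\
  (forall p, w p -> w (Dl p)).

Definition prime_theory (w : form -> Prop) : Prop :=
  IML1_theory w /\ ~ w Bot /\ (forall p q, w (Or p q) <-> (w p \/ w q)).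

Section Models.
Variable W : Type.

Definition bigcapN (F : (W -> Prop) -> Prop) : W -> Prop :=
  fun u => forall X, F X -> X u.
Definition bigcupN (F : (W -> Prop) -> Prop) : W -> Prop :=
  fun u => exists X, F X /\ X u.

Definition nIML1_model (N : W -> (W -> Prop) -> Prop) (V : nat -> W -> Prop) : Prop :=
  inhabited W /\
  (forall w,
     bigcapN (N w) w /\
     N w (bigcapN (N w)) /\
     (forall u, bigcapN (N w) u ->
                  forall v, bigcapN (N u) v -> bigcapN (N w) v) /\
     (forall X : W -> Prop,
                  (forall v, bigcapN (N w) v -> X v) ->
                  (forall v, X v -> bigcupN (N w) v) -> N w X) /\
     (forall u, bigcapN (N w) u ->
                  forall v, bigcupN (N u) v -> bigcupN (N w) v)) /\
  (forall q w, V q w -> forall u, bigcapN (N w) u -> V q u).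
End Models.
Arguments bigcapN {W}.
Arguments bigcupN {W}.

Definition canW : Type := { w : form -> Prop | prime_theory w }.

Definition canA (w : canW) : canW -> Prop :=
  fun v => forall p, proj1_sig w p -> proj1_sig v p.
Definition canB (w : canW) : canW -> Prop :=
  fun v => forall p, proj1_sig w (Dl p) -> proj1_sig v p.
Definition canN (w : canW) : (canW -> Prop) -> Prop :=
  fun X => (forall v, canA w v -> X v) /\ (forall v, X v -> canB w v).
Definition canV (q : nat) : canW -> Prop :=
  fun w => proj1_sig w (Var q).

(** By axiom T, [A_w] is contained in [B_w], so both belong to [canN w]: the
    intersection of [canN w] is [A_w] and its union is [B_w].  The frame
    conditions then reduce to [A_w ⊆ A_u] and [B_u ⊆ B_w] whenever [w ⊆ u].
    The canonical model is nonempty because the formulas true under the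
    two-valued valuation with every variable false and [Dl] read as the
    identity form a prime theory. *)

From Stdlib Require Import Bool Setoid.

Lemma IML1_theory_Dl_elim {w : form -> Prop} {p : form} :
  IML1_theory w -> w (Dl p) -> w p.
Proof.
  intros [Hax [Hmp _]] Hp.
  exact (Hmp _ _ (Hax _ (ax_T p)) Hp).
Qed.

Fixpoint eval_triv (p : form) : bool :=
  match p with
  | Var _ | Bot => false
  | And a b => eval_triv a && eval_triv b
  | Or a b => eval_triv a || eval_triv b
  | Imp a b => implb (eval_triv a) (eval_triv b)
  | Dl a => eval_triv a
  end.

Lemma prime_theory_eval_triv : prime_theory (fun p => eval_triv p = true).
Proof.
  split; [split; [| split] | split].
  - intros p Hax; destruct Hax; simpl;
      repeat match goal with |- context [eval_triv ?x] => destruct (eval_triv x) end;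
      reflexivity.
  - intros p q Hpq Hp; simpl in Hpq; rewrite Hp in Hpq; exact Hpq.
  - intros p Hp; exact Hp.
  - discriminate.
  - intros p q; apply orb_true_iff.
Qed.

Lemma canW_inhabited : inhabited canW.
Proof. exact (inhabits (exist _ _ prime_theory_eval_triv)). Qed.

Section CanonicalNeighbourhoods.

Context {w : canW}.

Lemma canA_refl : canA w w.
Proof. intros p Hp; exact Hp. Qed.

Lemma canA_sub_canB {v : canW} : canA w v -> canB w v.
Proof.
  intros Hwv p Hp; apply Hwv.
  exact (IML1_theory_Dl_elim (proj1 (proj2_sig w)) Hp).
Qed.

Lemma canN_canA : canN w (canA w).
Proof. split; [intros v Hv; exact Hv | exact @canA_sub_canB]. Qed.

Lemma canN_canB : canN w (canB w).
Proof. split; [exact @canA_sub_canB | intros v Hv; exact Hv]. Qed.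

Lemma bigcapN_canN (v : canW) : bigcapN (canN w) v <-> canA w v.
Proof.
  split.
  - intro Hv; exact (Hv _ canN_canA).
  - intros Hv X [HAX _]; exact (HAX _ Hv).
Qed.

Lemma bigcupN_canN (v : canW) : bigcupN (canN w) v <-> canB w v.
Proof.
  split.
  - intros [X [[_ HXB] Hv]]; exact (HXB _ Hv).
  - intro Hv; exists (canB w); split; [exact canN_canB | exact Hv].
Qed.

Lemma canA_trans {u v : canW} : canA w u -> canA u v -> canA w v.
Proof. intros Hwu Huv p Hp; exact (Huv _ (Hwu _ Hp)). Qed.

Lemma canB_antimono {u v : canW} : canA w u -> canB u v -> canB w v.
Proof. intros Hwu Huv p Hp; exact (Huv _ (Hwu _ Hp)). Qed.

End CanonicalNeighbourhoods.

Theorem lemma4p3 : nIML1_model canW canN canV.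
Proof.
  split; [exact canW_inhabited | split].
  - intro w; split; [| split; [| split; [| split]]].
    + rewrite bigcapN_canN; exact canA_refl.
    + split; intros v Hv; rewrite bigcapN_canN in *.
      * exact Hv.
      * exact (canA_sub_canB Hv).
    + intros u Hu v Hv.
      rewrite bigcapN_canN in Hu; rewrite bigcapN_canN in Hv; rewrite bigcapN_canN.
      exact (canA_trans Hu Hv).
    + intros X Hcap Hcup; split; intros v Hv.
      * apply Hcap; rewrite bigcapN_canN; exact Hv.
      * rewrite <- bigcupN_canN; exact (Hcup _ Hv).
    + intros u Hu v Hv; rewrite bigcapN_canN in Hu; rewrite bigcupN_canN in Hv.
      rewrite bigcupN_canN; exact (canB_antimono Hu Hv).
  - intros q w Hq u Hu; rewrite bigcapN_canN in Hu; exact (Hu _ Hq).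
Qed.
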